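(* Let $G=(V,E)$ be a graph, $k$ a positive integer, $C$ a minimum vertex cover of $G$, and $I=V\setminus C$. Let $D$ be a $k$-membership dominating set of $G$. Let $C_1=D\cap C$, $I_1=I\setminus (N(C_1)\cap I)$, and $R=N(C_1)\cap I\cap D$. Then $I_1\subseteq D$, and every vertex of $C\setminus (N[C_1]\cup N(I_1))$ is dominated by $R$ (i.e. has a neighbor in $R$ or belongs to $R$).
   Context: All graphs are finite, simple and undirected. For $v\in V$, $N(v)$ and $N[v]$ are the open and closed neighborhoods; for $S\subseteq V$, $N(S)=\bigcup_{u\in S}N(u)\setminus S$ and $N[S]=\bigcup_{u\in S}N[u]$. A set $S\subseteq V$ is a dominating set if every vertex lies in $S$ or has a neighbor in $S$. The membership of $u$ in $S$ is $M(u,S)=|N[u]\cap S|$. A $k$-membership dominating set is a dominating set $S$ with $M(u,S)\le k$ for all $u\in V$. *)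

From mathcomp Require Import all_boot.
Set Implicit Arguments. Unset Strict Implicit. Unset Printing Implicit Defensive.

Definition simple_graph (T : finType) (e : rel T) : Prop :=
  symmetric e /\ irreflexive e.

Section Graph.
Variables (T : finType) (e : rel T).

Definition nbh (v : T) : {set T} := [set u | e v u].
Definition cnbh (v : T) : {set T} := v |: nbh v.
Definition nbhS (S : {set T}) : {set T} := (\bigcup_(u in S) nbh u) :\: S.
Definition cnbhS (S : {set T}) : {set T} := \bigcup_(u in S) cnbh u.

Definition dominating (S : {set T}) : Prop :=
  forall v : T, v \in S \/ exists2 u, u \in S & e v u.

Definition membership (u : T) (S : {set T}) : nat := #|cnbh u :&: S|.

Definition kmem_dominating (k : nat) (S : {set T}) : Prop :=
  dominating S /\ forall u : T, membership u S <= k.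

Definition vertex_cover (C : {set T}) : Prop :=
  forall u v : T, e u v -> u \in C \/ v \in C.

Definition min_vertex_cover (C : {set T}) : Prop :=
  vertex_cover C /\ forall C' : {set T}, vertex_cover C' -> #|C| <= #|C'|.

Definition dominated_by (R : {set T}) (v : T) : Prop :=
  v \in R \/ exists2 u, u \in R & e v u.
End Graph.

From mathcomp Require Import all_boot.

(* Every neighbour of an independent vertex lies in the cover C, so a vertex of
   I outside N(C1) can only be dominated by itself; this gives I1 ⊆ D.  A cover
   vertex v outside N[C1] is not in D, so it is dominated by some u in D; u is
   not in C (else u ∈ C1 and v ∈ N[C1]) and not in I1 (else v ∈ N(I1)), hence
   u ∈ N(C1) ∩ I ∩ D = R. *)

Section MembershipDomination.
Variables (T : finType) (e : rel T).

Lemma in_nbhS {S : {set T}} {u x : T} :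
  u \in S -> e u x -> x \notin S -> x \in nbhS e S.
Proof.
move=> uS eux xS; rewrite /nbhS in_setD xS /=.
by apply/bigcupP; exists u; rewrite // inE.
Qed.

Lemma in_cnbhS {S : {set T}} {u x : T} :
  u \in S -> (x == u) || e u x -> x \in cnbhS e S.
Proof. by move=> uS xu; apply/bigcupP; exists u; rewrite // !inE. Qed.

Lemma vertex_cover_nbr {C : {set T}} {u v : T} :
  vertex_cover e C -> v \notin C -> e v u -> u \in C.
Proof. by move=> coverC vC /coverC [vC'|//]; rewrite vC' in vC. Qed.

Hypothesis esym : symmetric e.
Variables (C D : {set T}).
Hypotheses (coverC : vertex_cover e C) (domD : dominating e D).

Lemma independent_undominated_subset :
  ~: C :\: (nbhS e (D :&: C) :&: ~: C) \subset D.
Proof.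
apply/subsetP => v; rewrite in_setD in_setC => /andP [vN vC].
case: (domD v) => [//|[u uD evu]].
have uC : u \in C by exact: vertex_cover_nbr coverC vC evu.
apply: contraR vN => _; rewrite in_setI in_setC vC andbT.
apply: (in_nbhS (u := u)).
- by rewrite inE uD uC.
- by rewrite esym.
- by rewrite inE (negbTE vC) andbF.
Qed.

Lemma dominated_outside_cnbhS (v : T) :
  v \in C :\: (cnbhS e (D :&: C) :|: nbhS e (~: C :\: (nbhS e (D :&: C) :&: ~: C))) ->
  dominated_by e (nbhS e (D :&: C) :&: ~: C :&: D) v.
Proof.
rewrite in_setD in_setU negb_or => /andP [/andP [vNC1 vNI1] vC].
have vD : v \notin D.
  apply: contra vNC1 => vD; apply: (in_cnbhS (u := v)); last by rewrite eqxx.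
  by rewrite inE vD vC.
case: (domD v) => [vD'|[u uD evu]]; first by rewrite vD' in vD.
have uC : u \notin C.
  apply: contra vNC1 => uC; apply: (in_cnbhS (u := u)); last by rewrite esym evu orbT.
  by rewrite inE uD uC.
have uN : u \in nbhS e (D :&: C).
  apply: contraNT vNI1 => uN; apply: (in_nbhS (u := u)).
  - by rewrite in_setD in_setI in_setC uC (negbTE uN).
  - by rewrite esym.
  - by rewrite in_setD in_setC vC andbF.
by right; exists u; rewrite // !in_setI in_setC uN uC uD.
Qed.

End MembershipDomination.

Theorem lemma6 (T : finType) (e : rel T) (k : nat) (C D : {set T}) :
  simple_graph e -> 0 < k ->
  min_vertex_cover e C ->
  kmem_dominating e k D ->
  let I := ~: C in
  let C1 := D :&: C in
  let I1 := I :\: (nbhS e C1 :&: I) in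
  let R := nbhS e C1 :&: I :&: D in
  I1 \subset D /\
  (forall v, v \in C :\: (cnbhS e C1 :|: nbhS e I1) -> dominated_by e R v).
Proof.
move=> [esym _] _ [coverC _] [domD _] I C1 I1 R.
split; first exact: independent_undominated_subset.
exact: dominated_outside_cnbhS.
Qed.
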